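(* Let $E$ be a graph, $K$ a field and $R$ a $K$-algebra. Restriction to $E^0$, $t\mapsto t|_{E^0}$, is a bijection from the set of canonical, $K$-linear, $R$-valued traces on $L_K(E)$ onto the set of $R$-valued graph traces on $E$. Equivalently, every $R$-valued graph trace $\delta$ on $E$ extends uniquely to a canonical $K$-linear $R$-valued trace $t_\delta$ on $L_K(E)$, namely the one with $t_\delta(pq^* )=\delta_{p,q}\,\delta(\mathbf{r}(p))$ for all paths $p,q$ with $\mathbf{r}(p)=\mathbf{r}(q)$.
   Context: A (directed) graph $E=(E^0,E^1,\mathbf{s},\mathbf{r})$ has vertex set $E^0$, edge set $E^1$, source and range maps; no finiteness or countability is assumed. A path is a vertex $v$ (length $0$, $\mathbf{s}(v)=\mathbf{r}(v)=v$) or a sequence $p=e_1\cdots e_n$ of edges with $\mathbf{r}(e_i)=\mathbf{s}(e_{i+1})$, length $|p|=n$, $\mathbf{s}(p)=\mathbf{s}(e_1)$, $\mathbf{r}(p)=\mathbf{r}(e_n)$. A vertex $v$ is regular if $\mathbf{s}^{-1}(v)$ is nonempty and finite. The Leavitt path algebra $L_K(E)$ is the free $K$-algebra generated by $E^0\cup E^1\cup\{e^*:e\in E^1\}$ subject to (V) $vw=\delta_{v,w}v$; (E1) $\mathbf{s}(e)e=e\mathbf{r}(e)=e$; (E2) $\mathbf{r}(e)e^*=e^*\mathbf{s}(e)=e^*$; (CK1) $e^*f=\delta_{e,f}\mathbf{r}(e)$; (CK2) $v=\sum_{e\in\mathbf{s}^{-1}(v)}ee^*$ for regular $v$. For a path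 $p=e_1\cdots e_n$, $p^*=e_n^*\cdots e_1^*$, $v^*=v$. A trace is an additive map $t$ with $t(xy)=t(yx)$; it is $K$-linear if $t(ax)=at(x)$ for $a\in K$. A trace $t$ on $L_K(E)$ is canonical if $t(pq^* )=\delta_{p,q}\,t(\mathbf{r}(p))$ for all paths $p,q$ with $\mathbf{r}(p)=\mathbf{r}(q)$. For a ring $R$, an $R$-valued graph trace on $E$ is a map $\delta:E^0\to R$ with $\delta(v)=\sum_{e\in\mathbf{s}^{-1}(v)}\delta(\mathbf{r}(e))$ for every regular vertex $v$. *)

From HB Require Import structures.
From mathcomp Require Import all_boot all_order all_algebra.
From Stdlib Require List.
Set Implicit Arguments. Unset Strict Implicit. Unset Printing Implicit Defensive.
Import GRing.Theory.
Local Open Scope ring_scope.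

(* Possibly non-unital associative K-algebras: a K-vector space with a
   bilinear associative multiplication.  (L_K(E) is unital only when E^0 is
   finite, so we cannot use MathComp's algType, which has a unit.) *)
Record nualg (K : fieldType) := NUAlg {
  nua_car :> lmodType K;
  nua_mul : nua_car -> nua_car -> nua_car;
  nua_mulA : forall x y z, nua_mul x (nua_mul y z) = nua_mul (nua_mul x y) z;
  nua_mulDl : forall x y z, nua_mul (x + y) z = nua_mul x z + nua_mul y z;
  nua_mulDr : forall x y z, nua_mul x (y + z) = nua_mul x y + nua_mul x z;
  nua_mulZl : forall (a : K) x y, nua_mul (a *: x) y = a *: nua_mul x y;
  nua_mulZr : forall (a : K) x y, nua_mul x (a *: y) = a *: nua_mul x y
}.
Arguments nua_mul {K} _ _ _.

Section Graph.
Variables (V Ed : Type) (s r : Ed -> V).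

(* [l] lists s^{-1}(v) exactly once each (so s^{-1}(v) is finite). *)
Definition enumerates (v : V) (l : seq Ed) : Prop :=
  List.NoDup l /\ forall e, s e = v <-> List.In e l.

Definition regular (v : V) : Prop := exists l, enumerates v l /\ l <> [::].

(* R-valued graph trace.  The sum over s^{-1}(v) is taken along any duplicate-
   free enumeration of s^{-1}(v) (all such enumerations are permutations of
   each other). *)
Definition graph_trace (R : nmodType) (delta : V -> R) : Prop :=
  forall v l, enumerates v l -> l <> [::] ->
    delta v = \sum_(e <- l) delta (r e).

Definition LP_family (K : fieldType) (B : nualg K)
  (P : V -> B) (S Ss : Ed -> B) : Prop :=
  [/\ (forall v, nua_mul B (P v) (P v) = P v)
        /\ (forall v w, v <> w -> nua_mul B (P v) (P w) = 0),
      (forall e, nua_mul B (P (s e)) (S e) = S e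
                 /\ nua_mul B (S e) (P (r e)) = S e),
      (forall e, nua_mul B (P (r e)) (Ss e) = Ss e
                 /\ nua_mul B (Ss e) (P (s e)) = Ss e),
      (forall e, nua_mul B (Ss e) (S e) = P (r e))
        /\ (forall e f, e <> f -> nua_mul B (Ss e) (S f) = 0)
    & (forall v l, enumerates v l -> l <> [::] ->
         P v = \sum_(e <- l) nua_mul B (S e) (Ss e))].

Definition nua_hom (K : fieldType) (A B : nualg K) (f : A -> B) : Prop :=
  [/\ forall x y, f (x + y) = f x + f y,
      forall (a : K) x, f (a *: x) = a *: f x
    & forall x y, f (nua_mul A x y) = nua_mul B (f x) (f y)].

(* (A, P, S, Ss) is the Leavitt path algebra L_K(E): the free K-algebra on
   E^0 ∪ E^1 ∪ (E^1)^* modulo the relations, i.e. the universal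
   (initial) K-algebra with a Leavitt E-family. *)
Definition is_LPA (K : fieldType) (A : nualg K)
  (P : V -> A) (S Ss : Ed -> A) : Prop :=
  LP_family P S Ss /\
  forall (B : nualg K) (P' : V -> B) (S' Ss' : Ed -> B),
    LP_family P' S' Ss' ->
    exists f : A -> B,
      [/\ nua_hom f, (forall v, f (P v) = P' v), (forall e, f (S e) = S' e),
          (forall e, f (Ss e) = Ss' e)
        & forall g : A -> B, nua_hom g -> (forall v, g (P v) = P' v) ->
            (forall e, g (S e) = S' e) -> (forall e, g (Ss e) = Ss' e) ->
            forall x, g x = f x].

(* Paths: a pair (v, [e1;...;en]) with v = s(e1), r(ei) = s(e(i+1)).
   (v, [::]) is the length-0 path v. *)
Definition path := (V * seq Ed)%type.

Fixpoint chain (v : V) (l : seq Ed) : Prop :=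
  match l with
  | [::] => True
  | e :: l' => s e = v /\ chain (r e) l'
  end.

Definition is_path (p : path) : Prop := chain p.1 p.2.

Fixpoint last_vertex (v : V) (l : seq Ed) : V :=
  match l with
  | [::] => v
  | e :: l' => last_vertex (r e) l'
  end.

Definition path_r (p : path) : V := last_vertex p.1 p.2.

(* image of p = e1...en in A: P(v) S(e1) ... S(en)  (= e1...en for n>0) *)
Definition pmon (K : fieldType) (A : nualg K) (P : V -> A) (S : Ed -> A)
  (p : path) : A :=
  foldl (fun x e => nua_mul A x (S e)) (P p.1) p.2.

(* image of p^* : Ss(en) ... Ss(e1) P(v)  (= en^*...e1^* for n>0) *)
Definition pmon_star (K : fieldType) (A : nualg K) (P : V -> A) (Ss : Ed -> A)
  (p : path) : A :=
  foldl (fun x e => nua_mul A (Ss e) x) (P p.1) p.2.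

Definition is_trace (K : fieldType) (A : nualg K) (R : nmodType) (t : A -> R)
  : Prop :=
  (forall x y, t (x + y) = t x + t y) /\
  (forall x y, t (nua_mul A x y) = t (nua_mul A y x)).

Definition K_linear (K : fieldType) (A : nualg K) (R : lmodType K) (t : A -> R)
  : Prop := forall (a : K) x, t (a *: x) = a *: t x.

Definition canonical_trace (K : fieldType) (A : nualg K) (R : nmodType)
  (P : V -> A) (S Ss : Ed -> A) (t : A -> R) : Prop :=
  forall p q, is_path p -> is_path q -> path_r p = path_r q ->
    (p = q -> t (nua_mul A (pmon P S p) (pmon_star P Ss q)) = t (P (path_r p)))
    /\ (p <> q -> t (nua_mul A (pmon P S p) (pmon_star P Ss q)) = 0).

End Graph.

From Pilot Require Import Defs.
From HB Require Import structures.
From mathcomp Require Import all_boot all_order all_algebra.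
From mathcomp Require Import boolp functions.
Set Implicit Arguments. Unset Strict Implicit. Unset Printing Implicit Defensive.
Import GRing.Theory.
Local Open Scope ring_scope.

(* Restricting a trace [t] to the vertices gives a graph trace: by (CK2) and
   (CK1), [t v = sum_e t (e e^* ) = sum_e t (e^* e) = sum_e t (r e)].

   Uniqueness: the monomials [p q^*] with [r p = r q] span a subalgebra of
   L_K(E) that contains the generators, hence, by the universal property, all of
   L_K(E); on such a monomial a canonical trace is determined by its value at
   the vertex [r p].

   Existence: put [tau (p q^* ) = delta_{p,q} delta (r p)].  Monomials, with 0,
   form a semigroup in which [tau (x y) = tau (y x)].  A formal combination [l]
   of monomials defines the functional [m |-> tau (l m)], [m] a monomial or 1;
   these functionals form an algebra, the formal span modulo the kernel of the
   pairing, whose product is well defined because [tau] is symmetric.  The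
   images of vertices and edges satisfy (V)-(CK1) there, and (CK2) exactly
   because [delta] is a graph trace.  Evaluation at [m = 1] is a trace on this
   algebra, and composing it with the homomorphism from L_K(E) given by the
   universal property yields [t_delta]. *)

Local Notation "x ** y" := (nua_mul _ x y) (at level 40, left associativity).

Lemma add_morph0 (U W : zmodType) (f : U -> W) : {morph f : x y / x + y} -> f 0 = 0.
Proof. by move=> fD; apply: (@addrI _ (f 0)); rewrite -fD !addr0. Qed.

Lemma add_morph_sum (U W : zmodType) (f : U -> W) (I : Type) (l : seq I) (F : I -> U) :
  {morph f : x y / x + y} -> f (\sum_(i <- l) F i) = \sum_(i <- l) f (F i).
Proof. by move=> fD; apply: big_morph => //; exact: add_morph0. Qed.

Section NualgTheory.
Variables (K : fieldType) (A : nualg K).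
Implicit Types x y : A.

Lemma nua_mul0l x : 0 ** x = 0.
Proof. exact: (add_morph0 (f := fun y => y ** x) (fun a b => nua_mulDl a b x)). Qed.

Lemma nua_mul0r x : x ** 0 = 0.
Proof. exact: (add_morph0 (f := fun y => x ** y) (nua_mulDr x)). Qed.

End NualgTheory.

(** * Subspaces and the induction principle of L_K(E) *)

Definition lin_closed (K : fieldType) (U : lmodType K) (Q : U -> Prop) :=
  Q 0 /\ forall a x y, Q x -> Q y -> Q (a *: x + y).

Section LinClosed.
Variables (K : fieldType) (U : lmodType K) (Q : U -> Prop) (HQ : lin_closed Q).

Lemma lin_closedD x y : Q x -> Q y -> Q (x + y).
Proof. by case: HQ => _ QDZ Qx Qy; rewrite -[x]scale1r; exact: QDZ. Qed.

Lemma lin_closedZ a x : Q x -> Q (a *: x).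
Proof. by case: HQ => Q0 QDZ Qx; rewrite -[_ *: _]addr0; exact: QDZ. Qed.

End LinClosed.

Section Subspace.
Variables (K : fieldType) (U : lmodType K) (Q : U -> Prop) (HQ : lin_closed Q).

(* [HQ] is an argument so that the submodule instance below is keyed on it. *)
Definition subspace_pred of lin_closed Q : {pred U} := fun x => `[< Q x >].

Lemma subspace_pred_submod : GRing.submod_closed (subspace_pred HQ).
Proof.
case: HQ => Q0 QDZ; split=> [|a x y /asboolP Qx /asboolP Qy]; apply/asboolP => //.
exact: QDZ.
Qed.

HB.instance Definition _ :=
  GRing.isSubmodClosed.Build K U (subspace_pred HQ) subspace_pred_submod.

Record subspace := Subspace { subspace_val :> U; _ : subspace_val \in subspace_pred HQ }.

HB.instance Definition _ := [isSub for subspace_val].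
HB.instance Definition _ := [Choice of subspace by <:].
HB.instance Definition _ := [SubChoice_isSubLmodule of subspace by <:].

Definition in_subspace (x : U) (Qx : Q x) : subspace := Subspace (asboolT Qx).

Lemma subspaceP (x : subspace) : Q (val x).
Proof. by case: x => y Qy; apply/asboolP. Qed.

End Subspace.

Section SubNualg.
Variables (K : fieldType) (A : nualg K) (Q : A -> Prop) (HQ : lin_closed Q).
Hypothesis QM : forall x y, Q x -> Q y -> Q (x ** y).

Definition subspace_mul (x y : subspace HQ) : subspace HQ :=
  in_subspace HQ (QM (subspaceP x) (subspaceP y)).

Lemma subspace_mulA x y z : subspace_mul x (subspace_mul y z) = subspace_mul (subspace_mul x y) z.
Proof. by apply: val_inj; rewrite /= nua_mulA. Qed.
Lemma subspace_mulDl x y z : subspace_mul (x + y) z = subspace_mul x z + subspace_mul y z.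
Proof. by apply: val_inj; rewrite /= nua_mulDl. Qed.
Lemma subspace_mulDr x y z : subspace_mul x (y + z) = subspace_mul x y + subspace_mul x z.
Proof. by apply: val_inj; rewrite /= nua_mulDr. Qed.
Lemma subspace_mulZl a x y : subspace_mul (a *: x) y = a *: subspace_mul x y.
Proof. by apply: val_inj; rewrite /= nua_mulZl. Qed.
Lemma subspace_mulZr a x y : subspace_mul x (a *: y) = a *: subspace_mul x y.
Proof. by apply: val_inj; rewrite /= nua_mulZr. Qed.

Definition subnualg : nualg K :=
  NUAlg subspace_mulA subspace_mulDl subspace_mulDr subspace_mulZl subspace_mulZr.

End SubNualg.

Section LPAInduction.
Variables (V Ed : Type) (s r : Ed -> V) (K : fieldType) (A : nualg K).
Variables (P : V -> A) (S Ss : Ed -> A).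

Lemma LP_family_val (Q : A -> Prop) (HQ : lin_closed Q)
    (QM : forall x y, Q x -> Q y -> Q (x ** y))
    (P' : V -> subnualg HQ QM) (S' Ss' : Ed -> subnualg HQ QM) :
  (forall v, val (P' v) = P v) -> (forall e, val (S' e) = S e) ->
  (forall e, val (Ss' e) = Ss e) ->
  LP_family s r P S Ss -> LP_family s r P' S' Ss'.
Proof.
move=> PE SE SsE [[PP PPn] PS PSs [SsS SsSn] CK2].
split; [split=> [v|v w vw]|move=> e; split|move=> e; split|split=> [e|e f ef]|];
  try (apply: val_inj; rewrite /= ?PE ?SE ?SsE).
- exact: PP.
- exact: PPn.
- by case: (PS e).
- by case: (PS e).
- by case: (PSs e).
- by case: (PSs e).
- exact: SsS.
- exact: SsSn.
- move=> v l vl l0; apply: val_inj; rewrite raddf_sum PE (CK2 v l) //.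
  by apply: eq_bigr => e _ /=; rewrite SE SsE.
Qed.

Lemma LPA_ind (Q : A -> Prop) : is_LPA s r P S Ss -> lin_closed Q ->
  (forall x y, Q x -> Q y -> Q (x ** y)) ->
  (forall v, Q (P v)) -> (forall e, Q (S e)) -> (forall e, Q (Ss e)) ->
  forall x, Q x.
Proof.
move=> [LPA univ] HQ QM QP QS QSs x.
pose P' v : subnualg HQ QM := in_subspace HQ (QP v).
pose S' e : subnualg HQ QM := in_subspace HQ (QS e).
pose Ss' e : subnualg HQ QM := in_subspace HQ (QSs e).
have [f [[fD fZ fM] fP fS fSs _]] := univ _ _ _ _ (@LP_family_val _ HQ QM P' S' Ss'
  (fun=> erefl) (fun=> erefl) (fun=> erefl) LPA).
have [g [_ _ _ _ homE]] := univ _ _ _ _ LPA.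
have valf_hom : nua_hom (fun y => val (f y)).
  by split=> [y z|a y|y z]; rewrite ?fD ?fZ ?fM ?raddfD ?linearZ.
(* [val \o f] and the identity both fix the generators, so they agree. *)
have -> : x = val (f x).
  have id_hom : nua_hom (fun y : A => y) by [].
  transitivity (g x); first exact: (homE _ id_hom (fun=> erefl) (fun=> erefl) (fun=> erefl)).
  by symmetry; apply: (homE _ valf_hom) => [v|e|e] /=; rewrite ?fP ?fS ?fSs.
exact: subspaceP.
Qed.

End LPAInduction.

Lemma catsI (T : Type) (s : seq T) : injective (cat s).
Proof. by elim: s => //= x s IH d k [/IH]. Qed.

Lemma cat_prefix (T : Type) (a b e f : seq T) : a ++ e = b ++ f ->
  (exists k, b = a ++ k) \/ (exists k, a = b ++ k).
Proof.
elim: a b => [|x a IH] [|y b] /=;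
  try by [left; exists (y :: b) | right; exists (x :: a) | left; exists [::]].
by case=> <- /IH [[k ->]|[k ->]]; [left|right]; exists k.
Qed.

Lemma big_In_eq (T : Type) (M : nmodType) (l : seq T) (F G : T -> M) :
  (forall e, List.In e l -> F e = G e) -> \sum_(e <- l) F e = \sum_(e <- l) G e.
Proof.
elim: l => [|x l IH] FG; first by rewrite !big_nil.
by rewrite !big_cons FG /= ?IH //; [move=> e le; apply: FG; right|left].
Qed.

Lemma big_In_single (T : Type) (M : nmodType) (l : seq T) (F : T -> M) e0 :
  List.NoDup l -> List.In e0 l -> (forall e, List.In e l -> e <> e0 -> F e = 0) ->
  \sum_(e <- l) F e = F e0.
Proof.
elim: l => [|x l IH] //= /List.NoDup_cons_iff [xl nd] [<-|e0l] F0.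
  rewrite big_cons (big_In_eq (G := fun=> 0)) ?big1 ?addr0 // => e el.
  by apply: F0; [right|move=> ex; apply: xl; rewrite -ex].
rewrite big_cons F0 ?add0r; [|left|move=> x0]; rewrite ?IH //.
- by move=> e el; apply: F0; right.
- by apply: xl; rewrite x0.
Qed.

(** * Monomials *)

Section Monomials.
Variables (V Ed : Type).
Implicit Types (p q c : Defs.path V Ed) (d k : seq Ed).

Definition path_ext p d : Defs.path V Ed := (p.1, p.2 ++ d).

Lemma path_ext0 p : path_ext p [::] = p.
Proof. by case: p => u l; rewrite /path_ext cats0. Qed.

Lemma path_extA p d k : path_ext (path_ext p d) k = path_ext p (d ++ k).
Proof. by rewrite /path_ext catA. Qed.

Lemma path_ext_inj p : injective (path_ext p).
Proof. by move=> d k [/catsI]. Qed.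

Lemma path_ext_id p d : path_ext p d = p -> d = [::].
Proof. by move=> E; apply: (@path_ext_inj p); rewrite E path_ext0. Qed.

Lemma path_ext_nil p d k : path_ext (path_ext p d) k = p -> d = [::] /\ k = [::].
Proof. by rewrite path_extA => /path_ext_id; case: d; case: k. Qed.

Lemma path_ext_prefix p q d k : path_ext p d = path_ext q k ->
  (exists k', q = path_ext p k') \/ (exists d', p = path_ext q d').
Proof.
case: p q => [u a] [w b] [<- /cat_prefix [[k' ->]|[d' ->]]]; [left|right];
  by [exists k' | exists d'].
Qed.

(* A monomial [(p, q)] stands for [p q^*]. *)
Definition monomial := (Defs.path V Ed * Defs.path V Ed)%type.
Implicit Types x y z : monomial.

(* The product in L_K(E), with [None] for 0 (see [mon_mulP]). *)
Definition mon_mul x y : option monomial :=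
  if pselect (exists d, y.1 = path_ext x.2 d)
  then Some (path_ext x.1 (drop (size x.2.2) y.1.2), y.2)
  else if pselect (exists d, x.2 = path_ext y.1 d)
  then Some (x.1, path_ext y.2 (drop (size y.1.2) x.2.2))
  else None.

Variant mon_mul_spec x y : option monomial -> Type :=
| MonMulExtL d of y.1 = path_ext x.2 d :
    mon_mul_spec x y (Some (path_ext x.1 d, y.2))
| MonMulExtR d of x.2 = path_ext y.1 d & d <> [::] :
    mon_mul_spec x y (Some (x.1, path_ext y.2 d))
| MonMulZero of (forall d, y.1 <> path_ext x.2 d) & (forall d, x.2 <> path_ext y.1 d) :
    mon_mul_spec x y None.

Lemma mon_mulP x y : mon_mul_spec x y (mon_mul x y).
Proof.
rewrite /mon_mul; case: pselect => /= [dE|NL].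
  by case: (cid dE) => d Ey; rewrite Ey drop_size_cat //; exact: MonMulExtL.
case: pselect => /= [dE|NR]; last by apply: MonMulZero => d E; [apply: NL|apply: NR]; exists d.
case: (cid dE) => d Ex; rewrite Ex drop_size_cat //; apply: MonMulExtR => // d0.
by apply: NL; exists [::]; rewrite Ex d0 !path_ext0.
Qed.

Lemma mon_mul_extl p q d q' : mon_mul (p, q) (path_ext q d, q') = Some (path_ext p d, q').
Proof.
case: mon_mulP => /= [d' E|d' E _|N _]; last by case: (N d).
  by rewrite (path_ext_inj E).
by case: (path_ext_nil (esym E)) => -> ->; rewrite !path_ext0.
Qed.

Lemma mon_mul_extr p q d q' : mon_mul (p, path_ext q d) (q, q') = Some (p, path_ext q' d).
Proof.
case: mon_mulP => /= [d' E|d' E _|_ N]; last by case: (N d).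
  by case: (path_ext_nil (esym E)) => -> ->; rewrite !path_ext0.
by rewrite (path_ext_inj E).
Qed.

Lemma mon_mul0 x y : (forall d, y.1 <> path_ext x.2 d) -> (forall d, x.2 <> path_ext y.1 d) ->
  mon_mul x y = None.
Proof. by move=> NL NR; case: mon_mulP => // d E; [case: (NL d)|case: (NR d)]. Qed.

(* Monomials act faithfully on paths by left multiplication, [p q^* . q d = p d];
   associativity of [mon_mul] is inherited from composition of the actions. *)
Definition mon_act x c : option (Defs.path V Ed) :=
  if pselect (exists d, c = path_ext x.2 d)
  then Some (path_ext x.1 (drop (size x.2.2) c.2)) else None.

Variant mon_act_spec x c : option (Defs.path V Ed) -> Type :=
| MonActExt d of c = path_ext x.2 d : mon_act_spec x c (Some (path_ext x.1 d))
| MonActZero of (forall d, c <> path_ext x.2 d) : mon_act_spec x c None.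

Lemma mon_actP x c : mon_act_spec x c (mon_act x c).
Proof.
rewrite /mon_act; case: pselect => /= [dE|N].
  by case: (cid dE) => d Ec; rewrite Ec drop_size_cat //; exact: MonActExt.
by apply: MonActZero => d E; apply: N; exists d.
Qed.

Lemma mon_act_ext x d : mon_act x (path_ext x.2 d) = Some (path_ext x.1 d).
Proof. by case: mon_actP => [d' /path_ext_inj ->|/(_ d)]. Qed.

Definition mon_omul (o1 o2 : option monomial) : option monomial :=
  if o1 is Some x then (if o2 is Some y then mon_mul x y else None) else None.

Definition mon_oact (o : option monomial) c : option (Defs.path V Ed) :=
  if o is Some x then mon_act x c else None.

Lemma mon_act_mul x y c : mon_oact (mon_mul x y) c = obind (mon_act x) (mon_act y c).
Proof.
case: mon_mulP => /= [d Ey|d Ex _|NL NR].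
- case: (mon_actP y c) => [k ->|N] /=.
    by rewrite Ey path_extA (mon_act_ext (_, y.2)) mon_act_ext path_extA.
  by case: mon_actP => // k E; case: (N k).
- case: (mon_actP y c) => [k ->|N] /=.
    case: (mon_actP x) => [k' |N'].
      rewrite Ex path_extA => /path_ext_inj ->.
      by rewrite -path_extA (mon_act_ext (x.1, _)).
    case: mon_actP => // k' /=; rewrite path_extA => /path_ext_inj Ek.
    by case: (N' k'); rewrite Ex path_extA Ek.
  by case: mon_actP => // k' /= E; case: (N (d ++ k')); rewrite E path_extA.
- case: (mon_actP y c) => [k _|] //=; case: mon_actP => // k' E.
  by case: (path_ext_prefix E) => [[k'' /NR]|[d' /NL]].
Qed.

Lemma mon_act_self x : mon_act x x.2 = Some x.1.
Proof. by rewrite -[in LHS](path_ext0 x.2) mon_act_ext path_ext0. Qed.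

Lemma mon_act_inj x x' : (forall c, mon_act x c = mon_act x' c) -> x = x'.
Proof.
move=> E; have := mon_act_self x; rewrite E.
case: mon_actP => // k Ex [Ex1].
have := mon_act_self x'; rewrite -E.
case: mon_actP => // k' Ex' _.
have [_ k0] : k' = [::] /\ k = [::] by apply: (@path_ext_nil x.2); rewrite -Ex' -Ex.
move: Ex Ex1; rewrite k0 !path_ext0.
by case: x x' {E Ex'} => ? ? [? ?] /= -> ->.
Qed.

Lemma mon_oact_mul o1 o2 c :
  mon_oact (mon_omul o1 o2) c = obind (mon_oact o1) (mon_oact o2 c).
Proof. by case: o1 o2 => [x|] [y|] //=; [exact: mon_act_mul|case: mon_act]. Qed.

Lemma mon_omulA : associative mon_omul.
Proof.
have oact_inj o1 o2 : (forall c, mon_oact o1 c = mon_oact o2 c) -> o1 = o2.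
  case: o1 o2 => [x|] [y|] E; first by rewrite (@mon_act_inj x y).
  - by move: (E x.2); rewrite /= mon_act_self.
  - by move: (E y.2); rewrite /= mon_act_self.
  - by [].
move=> o1 o2 o3; apply: oact_inj => c; rewrite !mon_oact_mul.
by case: (mon_oact o3 c) => //= c'; rewrite mon_oact_mul.
Qed.

End Monomials.

Section ValidMonomials.
Variables (V Ed : Type) (s r : Ed -> V).
Implicit Types (p q : Defs.path V Ed) (x y : monomial V Ed).

Lemma chain_cat v l1 l2 :
  chain s r v (l1 ++ l2) <-> chain s r v l1 /\ chain s r (last_vertex r v l1) l2.
Proof. by elim: l1 v => [|e l IH] v /=; [split=> // -[]|rewrite IH; tauto]. Qed.

Lemma last_vertex_cat v l1 l2 :
  last_vertex r v (l1 ++ l2) = last_vertex r (last_vertex r v l1) l2.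
Proof. by elim: l1 v => //= e l IH v. Qed.

Lemma is_path_ext p d :
  is_path s r (path_ext p d) <-> is_path s r p /\ chain s r (path_r r p) d.
Proof. exact: chain_cat. Qed.

Lemma path_r_ext p d : path_r r (path_ext p d) = last_vertex r (path_r r p) d.
Proof. exact: last_vertex_cat. Qed.

Definition valid_mon x :=
  [/\ is_path s r x.1, is_path s r x.2 & path_r r x.1 = path_r r x.2].

Definition valid_omon (o : option (monomial V Ed)) :=
  if o is Some x then valid_mon x else True.

Lemma valid_mon_mul x y : valid_mon x -> valid_mon y -> valid_omon (mon_mul x y).
Proof.
move=> [px1 px2 ex] [py1 py2 ey]; case: mon_mulP => //= d E; rewrite /valid_mon /=.
  move: py1 ey; rewrite E => /is_path_ext [_ cd]; rewrite path_r_ext => <-.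
  by split=> //; [apply/is_path_ext; rewrite ex|rewrite path_r_ext ex].
move=> _; move: px2 ex; rewrite E => /is_path_ext [_ cd]; rewrite path_r_ext => ->.
by split=> //; [apply/is_path_ext; rewrite -ey|rewrite path_r_ext ey].
Qed.

Definition vertex_mon v : monomial V Ed := ((v, [::]), (v, [::])).
Definition edge_mon e : monomial V Ed := ((s e, [:: e]), (r e, [::])).
Definition ghost_mon e : monomial V Ed := ((r e, [::]), (s e, [:: e])).

End ValidMonomials.

Arguments vertex_mon {V Ed} v.

(** * Monomials in a Leavitt family *)

Section PathProducts.
Variables (K : fieldType) (A : nualg K) (Ed : Type) (F : Ed -> A).

Lemma foldl_mulr l a b :
  foldl (fun x e => x ** F e) (a ** b) l = a ** foldl (fun x e => x ** F e) b l.
Proof. by elim: l b => //= e l IH b; rewrite -nua_mulA IH. Qed.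

Lemma foldl_mull l a b :
  foldl (fun x e => F e ** x) (a ** b) l = foldl (fun x e => F e ** x) a l ** b.
Proof. by elim: l a => //= e l IH a; rewrite nua_mulA IH. Qed.

End PathProducts.

Section HomPathProducts.
Variables (V Ed : Type) (K : fieldType) (A B : nualg K) (f : A -> B).
Variables (P : V -> A) (S Ss : Ed -> A) (P' : V -> B) (S' Ss' : Ed -> B).
Hypotheses (fM : forall x y, f (x ** y) = f x ** f y) (fP : forall v, f (P v) = P' v).

Lemma hom_pmon p : (forall e, f (S e) = S' e) -> f (pmon P S p) = pmon P' S' p.
Proof.
move=> fS; rewrite /pmon -fP; elim: p.2 (P p.1) => //= e l IH a.
by rewrite IH fM fS.
Qed.

Lemma hom_pmon_star q : (forall e, f (Ss e) = Ss' e) -> f (pmon_star P Ss q) = pmon_star P' Ss' q.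
Proof.
move=> fSs; rewrite /pmon_star -fP; elim: q.2 (P q.1) => //= e l IH a.
by rewrite IH fM fSs.
Qed.

End HomPathProducts.

Section LPMonomials.
Variables (V Ed : Type) (s r : Ed -> V) (K : fieldType) (A : nualg K).
Variables (P : V -> A) (S Ss : Ed -> A).
Hypothesis LPA : LP_family s r P S Ss.
Implicit Types (p q : Defs.path V Ed) (x y : monomial V Ed).

Let PP v : P v ** P v = P v. Proof. by case: LPA => -[]. Qed.
Let PPn v w : v <> w -> P v ** P w = 0. Proof. by case: LPA => -[_ /(_ v w)]. Qed.
Let PS e : P (s e) ** S e = S e. Proof. by case: LPA => _ /(_ e) []. Qed.
Let SP e : S e ** P (r e) = S e. Proof. by case: LPA => _ /(_ e) [_ ->]. Qed.
Let PSs e : P (r e) ** Ss e = Ss e. Proof. by case: LPA => _ _ /(_ e) []. Qed.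
Let SsP e : Ss e ** P (s e) = Ss e. Proof. by case: LPA => _ _ /(_ e) [_ ->]. Qed.
Let SsS e : Ss e ** S e = P (r e). Proof. by case: LPA => _ _ _ []. Qed.
Let SsSn e f : e <> f -> Ss e ** S f = 0. Proof. by case: LPA => _ _ _ [_ /(_ e f)]. Qed.

Local Notation pmon := (pmon P S).
Local Notation pmon_star := (pmon_star P Ss).

Lemma pmon_ext p d : pmon (path_ext p d) = foldl (fun a e => a ** S e) (pmon p) d.
Proof. exact: foldl_cat. Qed.

Lemma pmon_star_ext q d :
  pmon_star (path_ext q d) = foldl (fun a e => Ss e ** a) (pmon_star q) d.
Proof. exact: foldl_cat. Qed.

Lemma pmon_cons w e b : pmon (w, e :: b) = (P w ** S e) ** pmon (r e, b).
Proof. by rewrite /pmon /= -foldl_mulr -nua_mulA SP. Qed.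

Lemma pmon_star_cons w e b : pmon_star (w, e :: b) = pmon_star (r e, b) ** (Ss e ** P w).
Proof. by rewrite /pmon_star /= -foldl_mull nua_mulA PSs. Qed.

Lemma P_pmon p : P p.1 ** pmon p = pmon p.
Proof. by rewrite /pmon -foldl_mulr PP. Qed.

Lemma pmon_star_P q : pmon_star q ** P q.1 = pmon_star q.
Proof. by rewrite /pmon_star -foldl_mull PP. Qed.

Lemma pmon_P p : pmon p ** P (path_r r p) = pmon p.
Proof.
case: p => w b; elim: b w => [|e b IH] w; first exact: PP.
by rewrite pmon_cons -nua_mulA IH.
Qed.

Lemma P_pmon_star q : P (path_r r q) ** pmon_star q = pmon_star q.
Proof.
case: q => w b; elim: b w => [|e b IH] w; first exact: PP.
by rewrite pmon_star_cons nua_mulA IH.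
Qed.

Lemma pmon_cat p d : pmon p ** pmon (path_r r p, d) = pmon (path_ext p d).
Proof. by rewrite /pmon -foldl_mulr pmon_P -pmon_ext. Qed.

Lemma pmon_star_cat q d :
  pmon_star (path_r r q, d) ** pmon_star q = pmon_star (path_ext q d).
Proof. by rewrite /pmon_star -foldl_mull P_pmon_star -pmon_star_ext. Qed.

Lemma P_orth_pmon v p : v <> p.1 -> P v ** pmon p = 0.
Proof. by move=> vp; rewrite -P_pmon nua_mulA PPn // nua_mul0l. Qed.

Lemma pmon_star_mul_orth q p : q.1 <> p.1 -> pmon_star q ** pmon p = 0.
Proof. by move=> qp; rewrite -pmon_star_P -nua_mulA P_orth_pmon // nua_mul0r. Qed.

Lemma star_cons_mul w e b f b' : s f = w ->
  pmon_star (w, e :: b) ** pmon (w, f :: b') =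
  pmon_star (r e, b) ** (Ss e ** S f) ** pmon (r f, b').
Proof.
move=> sf; rewrite pmon_star_cons (pmon_cons w f b') nua_mulA.
by rewrite -[_ ** _ ** (P w ** S f)]nua_mulA -sf PS -[Ss e ** _ ** S f]nua_mulA PS.
Qed.

Lemma star_cons_mul_eq w e b b' : s e = w ->
  pmon_star (w, e :: b) ** pmon (w, e :: b') = pmon_star (r e, b) ** pmon (r e, b').
Proof. by move=> se; rewrite star_cons_mul // SsS pmon_star_P. Qed.

Lemma star_mul_ext q d : is_path s r (path_ext q d) ->
  pmon_star q ** pmon (path_ext q d) = pmon (path_r r q, d).
Proof.
case: q => w b; elim: b w => [|e b IH] w; first by move=> _; exact: (P_pmon (w, d)).
by case=> /= se pb; rewrite star_cons_mul_eq //; exact: IH.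
Qed.

Lemma star_ext_mul p d : is_path s r (path_ext p d) ->
  pmon_star (path_ext p d) ** pmon p = pmon_star (path_r r p, d).
Proof.
case: p => w b; elim: b w => [|e b IH] w; first by move=> _; exact: (pmon_star_P (w, d)).
by case=> /= se pb; rewrite star_cons_mul_eq //; exact: IH.
Qed.

Lemma star_mul0 q p : is_path s r p ->
  (forall d, p <> path_ext q d) -> (forall d, q <> path_ext p d) ->
  pmon_star q ** pmon p = 0.
Proof.
case: q p => w b [w' b'] pp Np Nq.
have [ww'|] := pselect (w = w'); last exact: (@pmon_star_mul_orth (w, b) (w', b')).
subst w'; elim: b w b' pp Np Nq => [|e b IH] w [|f b'] pp Np Nq.
- by case: (Np [::] erefl).
- by case: (Np (f :: b') erefl).
- by case: (Nq (e :: b) erefl).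
case: pp => /= sf pb; have [ef|ef] := pselect (e = f); last first.
  by rewrite star_cons_mul // SsSn // nua_mul0r nua_mul0l.
subst f; rewrite star_cons_mul_eq //.
by apply: IH => // d [E]; [apply: (Np d)|apply: (Nq d)]; rewrite /path_ext /= E.
Qed.

Definition lp_mon x := pmon x.1 ** pmon_star x.2.
Definition lp_omon (o : option (monomial V Ed)) := if o is Some x then lp_mon x else 0.

Lemma lp_mon_mul x y : valid_mon s r x -> valid_mon s r y ->
  lp_mon x ** lp_mon y = lp_omon (mon_mul x y).
Proof.
move=> [px1 px2 ex] [py1 py2 ey].
rewrite /lp_mon nua_mulA -[pmon x.1 ** _ ** _]nua_mulA.
case: mon_mulP => /= [d Ey|d Ex _|NL NR].
- by rewrite Ey star_mul_ext -?Ey // -ex pmon_cat.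
- by rewrite Ex star_ext_mul -?Ex // -nua_mulA ey pmon_star_cat.
- by rewrite star_mul0 // nua_mul0r nua_mul0l.
Qed.

Lemma lp_mon_vertex v : lp_mon (vertex_mon v) = P v.
Proof. exact: PP. Qed.

Lemma lp_mon_edge e : lp_mon (edge_mon s r e) = S e.
Proof. by rewrite /lp_mon /pmon /pmon_star /= PS SP. Qed.

Lemma lp_mon_ghost e : lp_mon (ghost_mon s r e) = Ss e.
Proof. by rewrite /lp_mon /pmon /pmon_star /= SsP PSs. Qed.

End LPMonomials.

Section LPSpan.
Variables (V Ed : Type) (s r : Ed -> V) (K : fieldType) (A : nualg K).
Variables (P : V -> A) (S Ss : Ed -> A).

Inductive lp_span : A -> Prop :=
| lp_span0 : lp_span 0
| lp_span_cons a x b : valid_mon s r x -> lp_span b -> lp_span (a *: lp_mon P S Ss x + b).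

Lemma lin_closed_lp_span : lin_closed lp_span.
Proof.
split=> [|a b c]; first exact: lp_span0.
elim=> [|a' x b' vx _ IH] Sc; first by rewrite scaler0 add0r.
by rewrite scalerDr scalerA -addrA; apply: lp_span_cons => //; exact: IH.
Qed.

Lemma lp_span_mon x : valid_mon s r x -> lp_span (lp_mon P S Ss x).
Proof.
move=> vx; rewrite -[lp_mon P S Ss x]addr0 -[lp_mon P S Ss x]scale1r.
exact: lp_span_cons vx lp_span0.
Qed.

Hypothesis LPA : LP_family s r P S Ss.

Lemma lp_span_mon_mul x b : valid_mon s r x -> lp_span b -> lp_span (lp_mon P S Ss x ** b).
Proof.
move=> vx; elim=> [|a y b' vy _ IH]; first by rewrite nua_mul0r; exact: lp_span0.
rewrite nua_mulDr nua_mulZr (lp_mon_mul LPA) //.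
apply: (lin_closedD lin_closed_lp_span) IH; apply: (lin_closedZ lin_closed_lp_span).
have := valid_mon_mul vx vy; case: mon_mul => [z|] /=; first exact: lp_span_mon.
by move=> _; exact: lp_span0.
Qed.

Lemma lp_span_mul a b : lp_span a -> lp_span b -> lp_span (a ** b).
Proof.
elim=> [|c x a' vx _ IH] Sb; first by rewrite nua_mul0l; exact: lp_span0.
rewrite nua_mulDl nua_mulZl; apply: (lin_closedD lin_closed_lp_span) (IH Sb).
by apply: (lin_closedZ lin_closed_lp_span); exact: lp_span_mon_mul.
Qed.

End LPSpan.

Lemma LPA_span (V Ed : Type) (s r : Ed -> V) (K : fieldType) (A : nualg K)
    (P : V -> A) (S Ss : Ed -> A) :
  is_LPA s r P S Ss -> forall a, lp_span s r P S Ss a.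
Proof.
move=> LPA; have [LP _] := LPA.
apply: (LPA_ind LPA (lin_closed_lp_span _ _ _ _ _) (lp_span_mul LP)) => [v|e|e].
- by rewrite -(lp_mon_vertex LP); apply: lp_span_mon.
- by rewrite -(lp_mon_edge LP); apply: lp_span_mon.
- by rewrite -(lp_mon_ghost LP); apply: lp_span_mon.
Qed.

(** * Restriction and uniqueness *)

Lemma graph_trace_restriction (V Ed : Type) (s r : Ed -> V) (K : fieldType) (A : nualg K)
    (P : V -> A) (S Ss : Ed -> A) (R : zmodType) (t : A -> R) :
  LP_family s r P S Ss -> is_trace t -> graph_trace s r (fun v => t (P v)).
Proof.
move=> [_ _ _ [SsS _] CK2] [tD tC] v l vl l0 /=.
rewrite (CK2 v l vl l0) (add_morph_sum (f := t) _ _ tD).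
by apply: eq_bigr => e _; rewrite tC SsS.
Qed.

Section CanonicalTraceUniqueness.
Variables (V Ed : Type) (s r : Ed -> V) (K : fieldType) (A : nualg K).
Variables (P : V -> A) (S Ss : Ed -> A) (R : lmodType K).

Lemma canonical_trace_mon (t : A -> R) x :
  canonical_trace s r P S Ss t -> valid_mon s r x ->
  t (lp_mon P S Ss x) = if pselect (x.1 = x.2) then t (P (path_r r x.1)) else 0.
Proof.
case: x => p q tc [pp pq pr]; have [tpq tnq] := tc p q pp pq pr.
by rewrite /lp_mon; case: pselect => /= [E|NE]; [exact: tpq|exact: tnq].
Qed.

Lemma canonical_trace_unique (t1 t2 : A -> R) :
  is_LPA s r P S Ss ->
  {morph t1 : x y / x + y} -> K_linear t1 -> canonical_trace s r P S Ss t1 ->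
  {morph t2 : x y / x + y} -> K_linear t2 -> canonical_trace s r P S Ss t2 ->
  (forall v, t1 (P v) = t2 (P v)) -> forall x, t1 x = t2 x.
Proof.
move=> LPA t1D t1Z t1c t2D t2Z t2c tP x.
elim: (LPA_span LPA x) => [|a y b vy _ IH]; first by rewrite !add_morph0.
by rewrite t1D t2D t1Z t2Z IH !canonical_trace_mon //; case: pselect => //= _; rewrite tP.
Qed.

End CanonicalTraceUniqueness.

(** * The trace algebra of a graph trace *)

Section MonomialTrace.
Variables (V Ed : Type) (s r : Ed -> V) (R : nmodType) (delta : V -> R).
Implicit Types (p q : Defs.path V Ed) (x y : monomial V Ed).

Definition mon_tau (o : option (monomial V Ed)) : R :=
  if o is Some x then (if pselect (x.1 = x.2) then delta (path_r r x.1) else 0) else 0.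

(* A closed form of [mon_tau (mon_mul x y)] that is visibly symmetric. *)
Definition tau_pairing x y : R :=
  if pselect (exists d, y = (path_ext x.2 d, path_ext x.1 d)) then delta (path_r r y.1)
  else if pselect (exists d, x = (path_ext y.2 d, path_ext y.1 d)) then delta (path_r r x.1)
  else 0.

Lemma tau_pairingC x y : valid_mon s r x -> tau_pairing x y = tau_pairing y x.
Proof.
case: x y => p q [p' q'] [_ _ /= e]; rewrite /tau_pairing /=.
case: pselect => /= [[d [-> ->]]|_]; case: pselect => //= -[d' [Ep _]].
have [d0 _] := path_ext_nil (esym Ep).
by rewrite d0 path_ext0 e.
Qed.

Lemma mon_tau_mul x y : valid_mon s r x -> valid_mon s r y ->
  mon_tau (mon_mul x y) = tau_pairing x y.
Proof.
case: x y => p q [p' q'] [_ _ /= e] _; rewrite /tau_pairing /=.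
case: mon_mulP => /= [d Ep'|d Eq d0|NL NR]; [subst p'|subst q|].
- case: (pselect (path_ext p d = q')) => /= [<-|Nq].
    by case: pselect => /= [_|[]]; [rewrite !path_r_ext e|exists d].
  case: pselect => /= [[d' [/catsI <- Eq']]|_]; first by case: Nq.
  case: pselect => //= -[d' [Ep Eq']].
  by case: (path_ext_nil (esym Eq')) => d0 d'0; case: Nq; rewrite Ep d0 d'0 !path_ext0.
- case: (pselect (p = path_ext q' d)) => /= [Ep|Np];
    (case: pselect => /= [[d' [E _]]|_]; first by case: d0; case: (path_ext_nil (esym E))).
    by case: pselect => /= [_|[]] //; exists d; rewrite Ep.
  by case: pselect => //= -[d' [Ep /catsI Ed']]; case: Np; rewrite Ep Ed'.
- case: pselect => /= [[d [Ep _]]|_]; first by case: (NL d).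
  by case: pselect => //= -[d [_ Eq]]; case: (NR d).
Qed.

Lemma mon_tau_mulC x y : valid_mon s r x -> valid_mon s r y ->
  mon_tau (mon_mul x y) = mon_tau (mon_mul y x).
Proof. by move=> vx vy; rewrite !mon_tau_mul // tau_pairingC. Qed.

Lemma mon_tau_diag x : x.1 = x.2 -> mon_tau (Some x) = delta (path_r r x.1).
Proof. by rewrite /mon_tau; case: pselect. Qed.

Lemma mon_tau_offdiag x : x.1 <> x.2 -> mon_tau (Some x) = 0.
Proof. by rewrite /mon_tau; case: pselect. Qed.

(* Here [None] stands for the empty product, not for the zero monomial. *)
Definition mon_rmul x (mm : option (monomial V Ed)) :=
  if mm is Some y then mon_mul x y else Some x.

End MonomialTrace.

Arguments mon_tau : simpl never.

Section MonomialTraceCK2.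
Variables (V Ed : Type) (s r : Ed -> V) (R : nmodType) (delta : V -> R).
Hypothesis gt : graph_trace s r delta.
Local Notation tau := (mon_tau r delta).

Lemma mon_mul_vertex v (y : monomial V Ed) :
  mon_mul (vertex_mon v) y = if pselect (y.1.1 = v) then Some y else None.
Proof.
case: y => [[u a] q] /=; case: pselect => /= [<-|uv].
  exact: (mon_mul_extl (u, [::]) (u, [::]) a q).
by apply: mon_mul0 => d [] // /esym.
Qed.

Lemma mon_tau_CK2 v l (mm : option (monomial V Ed)) :
  enumerates s v l -> l <> [::] -> valid_omon s r mm ->
  tau (mon_rmul (vertex_mon v) mm) =
  \sum_(e <- l) tau (mon_rmul ((s e, [:: e]), (s e, [:: e])) mm).
Proof.
move=> vl l0; have [nd en] := vl; case: mm => [[[u a] q]|] vy /=; last first.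
  rewrite mon_tau_diag // (gt vl l0).
  by apply: eq_bigr => e _; rewrite mon_tau_diag.
rewrite mon_mul_vertex /=; case: (pselect (u = v)) => /= [uv|uv]; last first.
  rewrite (big_In_eq (G := fun=> 0)) ?big1 // => e /en se.
  by rewrite mon_mul0 // => d [E _]; apply: uv; rewrite -se E.
subst u; case: a vy => [|e0 a] vy.
  rewrite (big_In_eq (G := fun e => if pselect ((v, [::]) = q) then delta (r e) else 0)).
    case: pselect => /= [<-|nq]; first by rewrite mon_tau_diag // -(gt vl l0).
    by rewrite mon_tau_offdiag // big1.
  move=> e /en se; rewrite se (mon_mul_extr (v, [:: e]) (v, [::]) [:: e] q).
  case: pselect => /= [<-|nq]; first exact: mon_tau_diag.
  by rewrite mon_tau_offdiag // => E; apply: nq; case: q E {vy} => w [|x [|y b]] //= [->].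
have [[se0 _] _ _] := vy.
rewrite (big_In_single nd (e0 := e0)).
    by rewrite se0 (mon_mul_extl (v, [:: e0]) (v, [:: e0]) a q).
  by apply/en.
by move=> e /en se ne; rewrite se mon_mul0 // => d /= [E _]; apply: ne; rewrite E.
Qed.

End MonomialTraceCK2.

Section ValidMonomialSemigroup.
Variables (V Ed : Type) (s r : Ed -> V).

Definition vmon := {x : monomial V Ed | `[< valid_mon s r x >]}.

Lemma vmon_valid (x : vmon) : valid_mon s r (val x).
Proof. by case: x => y vy; apply/asboolP. Qed.

Definition vmon_of x (vx : valid_mon s r x) : vmon := exist _ x (asboolT vx).

Lemma insub_vmon x (vx : valid_mon s r x) : insub x = Some (vmon_of vx).
Proof. exact: (insubT (fun y => `[< valid_mon s r y >]) (asboolT vx)). Qed.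

Definition vmon_mul (x y : vmon) : option vmon := obind insub (mon_mul (val x) (val y)).

Definition vmon_omul (a b : option vmon) : option vmon :=
  if a is Some x then (if b is Some y then vmon_mul x y else None) else None.

Lemma val_vmon_mul x y : omap val (vmon_mul x y) = mon_mul (val x) (val y).
Proof.
rewrite /vmon_mul; have := valid_mon_mul (vmon_valid x) (vmon_valid y).
by case: mon_mul => [z vz|] //=; rewrite (insub_vmon vz).
Qed.

Lemma val_vmon_omul a b : omap val (vmon_omul a b) = mon_omul (omap val a) (omap val b).
Proof. by case: a b => [x|] [y|] //=; exact: val_vmon_mul. Qed.

Lemma vmon_omulA : associative vmon_omul.
Proof. by move=> a b c; apply: (inj_omap val_inj); rewrite !val_vmon_omul mon_omulA. Qed.

Variables (R : nmodType) (delta : V -> R).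

Definition vmon_tau (a : option vmon) : R := mon_tau r delta (omap val a).

Lemma vmon_tauC a b : vmon_tau (vmon_omul a b) = vmon_tau (vmon_omul b a).
Proof.
case: a b => [x|] [y|] //; rewrite /vmon_tau !val_vmon_omul /=.
exact: mon_tau_mulC (vmon_valid x) (vmon_valid y).
Qed.

End ValidMonomialSemigroup.

Section TraceModel.
Variables (V Ed : Type) (s r : Ed -> V) (K : fieldType) (R : lmodType K) (delta : V -> R).
Local Notation vmon := (vmon s r).
Local Notation tau := (@vmon_tau V Ed s r R delta).
Implicit Types (a b m : option vmon).

(* As in [mon_rmul], [None] stands for the empty product. *)
Definition vmon_rmul a m := if m is Some _ then vmon_omul a m else a.
Definition vmon_lmul m a := if m is Some _ then vmon_omul m a else a.

Lemma vmon_rmul_mul a b m : vmon_rmul (vmon_omul a b) m = vmon_omul a (vmon_rmul b m).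
Proof. by case: m => // y; rewrite /= vmon_omulA. Qed.

Lemma vmon_tau_rotate a b m : tau (vmon_rmul (vmon_omul a b) m) = tau (vmon_omul b (vmon_lmul m a)).
Proof. by case: m => [y|]; rewrite /vmon_rmul /vmon_lmul vmon_tauC // vmon_omulA vmon_tauC. Qed.

Definition comb := seq (K * option vmon).
Implicit Types (l : comb) (g h : option vmon -> R).

Definition comb_sum l g : R := \sum_(ka <- l) ka.1 *: g ka.2.
Definition comb_scale (c : K) l : comb := [seq (c * ka.1, ka.2) | ka <- l].
Definition comb_mul l1 l2 : comb :=
  [seq (ka.1 * kb.1, vmon_omul ka.2 kb.2) | ka <- l1, kb <- l2].

Lemma eq_comb_sum l g h : g =1 h -> comb_sum l g = comb_sum l h.
Proof. by move=> gh; apply: eq_bigr => ka _; rewrite gh. Qed.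

Lemma comb_sum_cat l1 l2 g : comb_sum (l1 ++ l2) g = comb_sum l1 g + comb_sum l2 g.
Proof. exact: big_cat. Qed.

Lemma comb_sum_scale c l g : comb_sum (comb_scale c l) g = c *: comb_sum l g.
Proof. by rewrite /comb_sum big_map scaler_sumr; apply: eq_bigr => ka _; rewrite scalerA. Qed.

Lemma comb_sumD l g h : comb_sum l (fun a => g a + h a) = comb_sum l g + comb_sum l h.
Proof. by rewrite /comb_sum -big_split; apply: eq_bigr => ka _; rewrite scalerDr. Qed.

Lemma comb_sumZ c l g : comb_sum l (fun a => c *: g a) = c *: comb_sum l g.
Proof. by rewrite /comb_sum scaler_sumr; apply: eq_bigr => ka _; rewrite !scalerA mulrC. Qed.

Lemma comb_sum_mul l1 l2 g :
  comb_sum (comb_mul l1 l2) g = comb_sum l1 (fun a => comb_sum l2 (fun b => g (vmon_omul a b))).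
Proof.
rewrite /comb_sum big_allpairs_dep; apply: eq_bigr => ka _.
by rewrite scaler_sumr; apply: eq_bigr => kb _; rewrite scalerA.
Qed.

Lemma comb_sum_comm l1 l2 (G : option vmon -> option vmon -> R) :
  comb_sum l1 (fun a => comb_sum l2 (G a)) = comb_sum l2 (fun b => comb_sum l1 (G^~ b)).
Proof.
rewrite /comb_sum; under eq_bigr do rewrite scaler_sumr.
rewrite exchange_big; apply: eq_bigr => kb _; rewrite scaler_sumr.
by apply: eq_bigr => ka _; rewrite !scalerA mulrC.
Qed.

Definition comb_fun l m : R := comb_sum l (fun a => tau (vmon_rmul a m)).
Definition comb_pair l b : R := comb_sum l (fun a => tau (vmon_omul a b)).

Lemma comb_pairE l b : comb_pair l b = if b is Some _ then comb_fun l b else 0.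
Proof.
case: b => [y|] //; rewrite /comb_pair /comb_sum big1 // => ka _.
by case: ka => k [x|]; rewrite /vmon_tau /= scaler0.
Qed.

Lemma comb_fun_mull l1 l2 m :
  comb_fun (comb_mul l1 l2) m = comb_sum l2 (fun b => comb_pair l1 (vmon_rmul b m)).
Proof.
rewrite /comb_fun comb_sum_mul -comb_sum_comm.
by apply: eq_comb_sum => a; apply: eq_comb_sum => b; rewrite vmon_rmul_mul.
Qed.

Lemma comb_fun_mulr l1 l2 m :
  comb_fun (comb_mul l1 l2) m = comb_sum l1 (fun a => comb_pair l2 (vmon_lmul m a)).
Proof.
rewrite /comb_fun comb_sum_mul.
by apply: eq_comb_sum => a; apply: eq_comb_sum => b; rewrite vmon_tau_rotate.
Qed.

Lemma comb_fun_mul_congr l1 l1' l2 l2' : comb_fun l1 = comb_fun l1' ->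
  comb_fun l2 = comb_fun l2' -> comb_fun (comb_mul l1 l2) = comb_fun (comb_mul l1' l2').
Proof.
move=> E1 E2; have pairE l l' : comb_fun l = comb_fun l' -> comb_pair l = comb_pair l'.
  by move=> E; apply/funext => b; rewrite !comb_pairE E.
apply/funext => m; rewrite comb_fun_mull (pairE _ _ E1) -comb_fun_mull.
by rewrite !comb_fun_mulr (pairE _ _ E2).
Qed.

Lemma comb_fun_eq l l' : (forall g, comb_sum l g = comb_sum l' g) -> comb_fun l = comb_fun l'.
Proof. by move=> E; apply/funext => m; rewrite /comb_fun E. Qed.

End TraceModel.

Section TraceAlgebra.
Variables (V Ed : Type) (s r : Ed -> V) (K : fieldType) (R : lmodType K) (delta : V -> R).
Local Notation vmon := (vmon s r).
Local Notation comb := (@comb V Ed s r K).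
Local Notation comb_fun := (@comb_fun V Ed s r K R delta).
Local Notation tau := (@vmon_tau V Ed s r R delta).
Implicit Types (l : comb).

Definition is_comb_fun (F : option vmon -> R) := exists l, F = comb_fun l.

Lemma lin_closed_comb_fun : lin_closed is_comb_fun.
Proof.
split; first by exists [::]; apply/funext => m; rewrite /comb_fun /comb_sum big_nil.
move=> c _ _ [l ->] [l' ->]; exists (comb_scale c l ++ l'); apply/funext => m.
by rewrite /comb_fun comb_sum_cat comb_sum_scale.
Qed.

Local Notation B := (subspace lin_closed_comb_fun).
Implicit Types (u v w : B).

Definition comb_elem l : B := in_subspace lin_closed_comb_fun (ex_intro _ l erefl).

Definition comb_repr u : comb := projT1 (cid (subspaceP u)).

Lemma comb_reprK u : comb_elem (comb_repr u) = u.
Proof. by apply: val_inj; rewrite /= -(projT2 (cid (subspaceP u))). Qed.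

Lemma comb_elem_surj u : exists l, u = comb_elem l.
Proof. by exists (comb_repr u); rewrite comb_reprK. Qed.

Lemma comb_elem_eq l l' : comb_fun l = comb_fun l' -> comb_elem l = comb_elem l'.
Proof. by move=> E; apply: val_inj. Qed.

Lemma comb_elemD l l' : comb_elem l + comb_elem l' = comb_elem (l ++ l').
Proof. by apply: val_inj; apply/funext => m; rewrite /= /comb_fun comb_sum_cat. Qed.

Lemma comb_elemZ c l : c *: comb_elem l = comb_elem (comb_scale c l).
Proof. by apply: val_inj; apply/funext => m; rewrite /= /comb_fun comb_sum_scale. Qed.

Definition trace_mul u v : B := comb_elem (comb_mul (comb_repr u) (comb_repr v)).

Lemma trace_mul_comb_elem l1 l2 :
  trace_mul (comb_elem l1) (comb_elem l2) = comb_elem (comb_mul l1 l2).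
Proof.
have comb_reprE l : comb_fun (comb_repr (comb_elem l)) = comb_fun l.
  by rewrite -[RHS]/(val (comb_elem l)) -{2}(comb_reprK (comb_elem l)).
by apply: comb_elem_eq; apply: comb_fun_mul_congr; exact: comb_reprE.
Qed.

Lemma trace_mulA u v w : trace_mul u (trace_mul v w) = trace_mul (trace_mul u v) w.
Proof.
case: (comb_elem_surj u) (comb_elem_surj v) (comb_elem_surj w) => [l1 ->] [l2 ->] [l3 ->].
rewrite !trace_mul_comb_elem; apply/comb_elem_eq/comb_fun_eq => g.
rewrite !comb_sum_mul; apply: eq_comb_sum => a; rewrite comb_sum_mul.
by apply: eq_comb_sum => b; apply: eq_comb_sum => c; rewrite vmon_omulA.
Qed.

Lemma trace_mulDl u v w : trace_mul (u + v) w = trace_mul u w + trace_mul v w.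
Proof.
case: (comb_elem_surj u) (comb_elem_surj v) (comb_elem_surj w) => [l1 ->] [l2 ->] [l3 ->].
rewrite comb_elemD !trace_mul_comb_elem comb_elemD; apply/comb_elem_eq/comb_fun_eq => g.
by rewrite !(comb_sum_mul, comb_sum_cat).
Qed.

Lemma trace_mulDr u v w : trace_mul u (v + w) = trace_mul u v + trace_mul u w.
Proof.
case: (comb_elem_surj u) (comb_elem_surj v) (comb_elem_surj w) => [l1 ->] [l2 ->] [l3 ->].
rewrite comb_elemD !trace_mul_comb_elem comb_elemD; apply/comb_elem_eq/comb_fun_eq => g.
rewrite comb_sum_cat !comb_sum_mul -comb_sumD.
by apply: eq_comb_sum => a; rewrite comb_sum_cat.
Qed.

Lemma trace_mulZl c u v : trace_mul (c *: u) v = c *: trace_mul u v.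
Proof.
case: (comb_elem_surj u) (comb_elem_surj v) => [l1 ->] [l2 ->].
rewrite comb_elemZ !trace_mul_comb_elem comb_elemZ; apply/comb_elem_eq/comb_fun_eq => g.
by rewrite comb_sum_scale !comb_sum_mul comb_sum_scale.
Qed.

Lemma trace_mulZr c u v : trace_mul u (c *: v) = c *: trace_mul u v.
Proof.
case: (comb_elem_surj u) (comb_elem_surj v) => [l1 ->] [l2 ->].
rewrite comb_elemZ !trace_mul_comb_elem comb_elemZ; apply/comb_elem_eq/comb_fun_eq => g.
rewrite comb_sum_scale !comb_sum_mul -comb_sumZ.
by apply: eq_comb_sum => a; rewrite comb_sum_scale.
Qed.

Definition trace_alg : nualg K := NUAlg trace_mulA trace_mulDl trace_mulDr trace_mulZl trace_mulZr.

Lemma comb_elem_mul l1 l2 :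
  (comb_elem l1 : trace_alg) ** comb_elem l2 = comb_elem (comb_mul l1 l2).
Proof. exact: trace_mul_comb_elem. Qed.

Definition alg_trace (u : trace_alg) : R := val u None.

Lemma alg_trace_comb_elem l : alg_trace (comb_elem l) = comb_sum l tau.
Proof. by []. Qed.

Lemma alg_traceC (u v : trace_alg) : alg_trace (u ** v) = alg_trace (v ** u).
Proof.
case: (comb_elem_surj u) (comb_elem_surj v) => [l1 ->] [l2 ->].
rewrite /= !trace_mul_comb_elem !alg_trace_comb_elem !comb_sum_mul comb_sum_comm.
by apply: eq_comb_sum => b; apply: eq_comb_sum => a; rewrite vmon_tauC.
Qed.

End TraceAlgebra.

Section TraceAlgebraLP.
Variables (V Ed : Type) (s r : Ed -> V) (K : fieldType) (R : lmodType K) (delta : V -> R).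
Local Notation B := (@trace_alg V Ed s r K R delta).
Local Arguments nua_mul : simpl never.
Implicit Types (x y : monomial V Ed).

Definition gen_mon (o : option (monomial V Ed)) : B :=
  @comb_elem V Ed s r K R delta [:: (1, obind insub o)].

Lemma gen_mon_mul x y : valid_mon s r x -> valid_mon s r y ->
  gen_mon (Some x) ** gen_mon (Some y) = gen_mon (mon_mul x y).
Proof.
by move=> vx vy; rewrite comb_elem_mul /comb_mul /= (insub_vmon vx) (insub_vmon vy) mulr1.
Qed.

Lemma gen_mon0 : gen_mon None = 0.
Proof.
apply: val_inj; apply/funext => m.
by rewrite /= /comb_fun /comb_sum big_seq1 scale1r; case: m.
Qed.

Lemma gen_mon_val x m : valid_mon s r x ->
  val (gen_mon (Some x)) m = mon_tau r delta (mon_rmul x (omap val m)).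
Proof.
move=> vx; rewrite /= (insub_vmon vx) /comb_fun /comb_sum big_seq1 scale1r.
by case: m => [y|] //; rewrite /vmon_tau /= val_vmon_mul.
Qed.

Definition gen_vertex v := gen_mon (Some (vertex_mon v)).
Definition gen_edge e := gen_mon (Some (edge_mon s r e)).
Definition gen_ghost e := gen_mon (Some (ghost_mon s r e)).

Lemma trace_alg_LP_family :
  graph_trace s r delta -> LP_family s r gen_vertex gen_edge gen_ghost.
Proof.
move=> gt; split.
- split=> [v|v w vw]; rewrite gen_mon_mul //.
    by rewrite (mon_mul_extl (v, [::]) (v, [::]) [::] (v, [::])).
  by rewrite mon_mul0 ?gen_mon0 // => d [E _]; apply: vw; rewrite E.
- move=> e; rewrite !gen_mon_mul //; split.
    by rewrite (mon_mul_extl (s e, [::]) (s e, [::]) [:: e] (r e, [::])).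
  by rewrite (mon_mul_extl (s e, [:: e]) (r e, [::]) [::] (r e, [::])).
- move=> e; rewrite !gen_mon_mul //; split.
    by rewrite (mon_mul_extl (r e, [::]) (r e, [::]) [::] (s e, [:: e])).
  by rewrite (mon_mul_extr (r e, [::]) (s e, [::]) [:: e] (s e, [::])).
- split=> [e|e f ef]; rewrite gen_mon_mul //.
    by rewrite (mon_mul_extl (r e, [::]) (s e, [:: e]) [::] (r e, [::])).
  by rewrite mon_mul0 ?gen_mon0 // => d [_ E _]; apply: ef; rewrite E.
- move=> v l vl l0.
  have edge_ghost e : gen_edge e ** gen_ghost e = gen_mon (Some ((s e, [:: e]), (s e, [:: e]))).
    by rewrite gen_mon_mul // (mon_mul_extl (s e, [:: e]) (r e, [::]) [::] (s e, [:: e])).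
  under eq_bigr do rewrite edge_ghost.
  apply: val_inj; apply/funext => m; rewrite raddf_sum fct_sumE gen_mon_val //.
  rewrite (mon_tau_CK2 gt vl l0); last by case: m => [y|] //; exact: vmon_valid.
  by apply: eq_bigr => e _; symmetry; apply: gen_mon_val.
Qed.

Lemma foldl_gen_edge p d : is_path s r (path_ext p d) ->
  foldl (fun a e => a ** gen_edge e) (gen_mon (Some (p, (path_r r p, [::])))) d =
  gen_mon (Some (path_ext p d, (path_r r (path_ext p d), [::]))).
Proof.
elim: d p => [|e d IH] p; first by rewrite !path_ext0.
move=> ped /=; have /is_path_ext [pp [se _]] := ped.
have -> : gen_edge e = gen_mon (Some (path_ext (path_r r p, [::]) [:: e], (r e, [::]))).
  by rewrite /gen_edge /edge_mon se.
rewrite gen_mon_mul // mon_mul_extl.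
have -> : r e = path_r r (path_ext p [:: e]) by rewrite path_r_ext.
by rewrite IH path_extA.
Qed.

Lemma foldl_gen_ghost q d : is_path s r (path_ext q d) ->
  foldl (fun a e => gen_ghost e ** a) (gen_mon (Some ((path_r r q, [::]), q))) d =
  gen_mon (Some ((path_r r (path_ext q d), [::]), path_ext q d)).
Proof.
elim: d q => [|e d IH] q; first by rewrite !path_ext0.
move=> qed /=; have /is_path_ext [pq [se _]] := qed.
have -> : gen_ghost e = gen_mon (Some ((r e, [::]), path_ext (path_r r q, [::]) [:: e])).
  by rewrite /gen_ghost /ghost_mon se.
rewrite gen_mon_mul // mon_mul_extr.
have -> : r e = path_r r (path_ext q [:: e]) by rewrite path_r_ext.
by rewrite IH path_extA.
Qed.

Lemma pmon_gen p : is_path s r p ->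
  pmon gen_vertex gen_edge p = gen_mon (Some (p, (path_r r p, [::]))).
Proof. by case: p => u b pp; rewrite /pmon /= (@foldl_gen_edge (u, [::]) b pp). Qed.

Lemma pmon_star_gen q : is_path s r q ->
  pmon_star gen_vertex gen_ghost q = gen_mon (Some ((path_r r q, [::]), q)).
Proof. by case: q => u b pq; rewrite /pmon_star /= (@foldl_gen_ghost (u, [::]) b pq). Qed.

End TraceAlgebraLP.

(** * Existence *)

Section CanonicalTraceExistence.
Variables (V Ed : Type) (s r : Ed -> V) (K : fieldType) (A : nualg K).
Variables (P : V -> A) (S Ss : Ed -> A) (R : lmodType K).

Lemma canonical_trace_exists (delta : V -> R) :
  is_LPA s r P S Ss -> graph_trace s r delta ->
  exists t : A -> R, [/\ is_trace t, K_linear t & canonical_trace s r P S Ss t] /\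
    forall v, t (P v) = delta v.
Proof.
move=> [_ univ] gt.
have [f [[fD fZ fM] fP fS fSs _]] := univ _ _ _ _ (trace_alg_LP_family gt).
have trace_gen x : valid_mon s r x ->
    alg_trace (gen_mon s r delta (Some x)) = mon_tau r delta (Some x).
  by move=> vx; rewrite /alg_trace gen_mon_val.
have tP v : alg_trace (f (P v)) = delta v.
  by rewrite fP trace_gen // mon_tau_diag.
exists (fun x => alg_trace (f x)); split=> //; split.
- by split=> [x y|x y]; rewrite ?fD // !fM alg_traceC.
- by move=> a x; rewrite fZ.
move=> p q pp pq pr; rewrite fM (hom_pmon fM fP _ fS) (hom_pmon_star fM fP _ fSs).
rewrite pmon_gen // pmon_star_gen // gen_mon_mul // pr.
rewrite (mon_mul_extl p (path_r r q, [::]) [::] q) path_ext0 trace_gen // tP.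
by split=> [E|NE]; [rewrite mon_tau_diag // E|rewrite mon_tau_offdiag].
Qed.

End CanonicalTraceExistence.

Theorem proposition2p7 (K : fieldType) (V Ed : Type) (s r : Ed -> V)
  (R : algType K) (A : nualg K) (P : V -> A) (S Ss : Ed -> A) :
  is_LPA s r P S Ss ->
  let CT (t : A -> R) :=
    [/\ is_trace t, K_linear t & canonical_trace s r P S Ss t] in
  (* restriction lands in graph traces *)
  (forall t, CT t -> graph_trace s r (fun v => t (P v))) /\
  (* surjective: every graph trace extends *)
  (forall delta : V -> R, graph_trace s r delta ->
     exists t, CT t /\ forall v, t (P v) = delta v) /\
  (* injective *)
  (forall t1 t2, CT t1 -> CT t2 -> (forall v, t1 (P v) = t2 (P v)) ->
     forall x, t1 x = t2 x).
Proof.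
move=> LPA CT; split; [|split].
- by move=> t [tr _ _]; exact: graph_trace_restriction LPA.1 tr.
- by move=> delta gt; exact: canonical_trace_exists LPA gt.
- move=> t1 t2 [[t1D _] t1Z t1c] [[t2D _] t2Z t2c].
  exact: canonical_trace_unique LPA t1D t1Z t1c t2D t2Z t2c.
Qed.
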